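(* Let $\mathcal J_1,\dots,\mathcal J_l\subseteq S=K[V]$ be homogeneous prime ideals defining irreducible projective varieties. The following are equivalent: (1) the sequence $\mathcal J_1,\dots,\mathcal J_l$ is linearly joined; (2) for all $i=1,\dots,l$ there exist linear subspaces $\mathcal Q_i\subseteq V$ and ideals $\mathcal M_i\subseteq S$ such that (a) $\mathcal J_i=(\mathcal M_i,\mathcal Q_i)$ for all $i$; (b) the sequence of ideals $(\mathcal Q_1),\dots,(\mathcal Q_l)$ is linearly joined; (c) $\mathcal M_i\subseteq(\mathcal Q_j)$ for all $i\neq j$, $i,j\in\{1,\dots,l\}$.
   Context: $K$ is a field, $V$ a $K$-vector space of dimension $r+1$, $S=K[V]$ the polynomial ring with standard grading, $\mathbb P^r$ the associated projective space. For $Q\subseteq V$, $(Q)$ is the ideal of $S$ generated by $Q$; $(\mathcal M,\mathcal Q)$ is the ideal generated by the ideal $\mathcal M$ and the subspace $\mathcal Q$. For a projective variety $\mathcal V$, $\mathrm{span}(\mathcal V)$ is the smallest linear subspace containing it. An ordered sequence $\mathcal V_1,\dots,\mathcal V_l$ of irreducible projective subvarieties of $\mathbb P^r$ is linearly joined if for every $i=1,\dots,l-1$, $\mathcal V_{i+1}\cap(\mathcal V_1\cup\dots\cup\mathcal V_i)=\mathrm{span}(\mathcal V_{i+1})\cap\mathrm{span}(\mathcal V_1\cup\dots\cup\mathcal V_i)$; a sequence of homogeneous prime ideals (e.g. ideals generated by linear subspaces of $V$) is called linearly joined if the sequence of varieties they define is. *)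

From mathcomp Require Import all_boot all_order all_algebra.
From mathcomp Require Import mpoly.

Set Implicit Arguments.
Unset Strict Implicit.
Unset Printing Implicit Defensive.

Import GRing.Theory.
Local Open Scope ring_scope.

(* S = K[V] with dim V = n (= r+1): the polynomial ring {mpoly K[n]},
   V = the space of linear forms (degree-one homogeneous polynomials).
   Subsets of S are Prop-valued predicates. *)

Section Defs.
Variables (K : fieldType) (n : nat).
Local Notation S := {mpoly K[n]}.

Definition subS := S -> Prop.

Definition sub_incl (A B : subS) : Prop := forall p, A p -> B p.
Definition sub_eq (A B : subS) : Prop := forall p, A p <-> B p.

Definition is_ideal (I : subS) : Prop :=
  [/\ I 0, (forall p q, I p -> I q -> I (p + q)) &
      (forall a p, I p -> I (a * p))].

Definition gen_ideal (A : subS) : subS :=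
  fun p => forall I, is_ideal I -> sub_incl A I -> I p.

Definition gen_ideal2 (M Q : subS) : subS :=
  gen_ideal (fun p => M p \/ Q p).

Definition hcomp (d : nat) (p : S) : S :=
  \sum_(m <- msupp p | mdeg m == d) p@_m *: 'X_[m].

Definition is_homogeneous_ideal (I : subS) : Prop :=
  is_ideal I /\ forall p d, I p -> I (hcomp d p).

Definition is_prime_ideal (I : subS) : Prop :=
  [/\ is_ideal I, ~ I 1 & forall p q, I (p * q) -> I p \/ I q].

Definition relevant (I : subS) : Prop := ~ (forall i : 'I_n, I 'X_i).

Definition linear_form (p : S) : Prop :=
  exists c : 'I_n -> K, p = \sum_i c i *: 'X_i.

Definition is_lin_subspace (Q : subS) : Prop :=
  [/\ sub_incl Q linear_form, Q 0,
      (forall p q, Q p -> Q q -> Q (p + q)) &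
      (forall (c : K) p, Q p -> Q (c *: p))].

(* Points of P^r (scheme-theoretically): relevant homogeneous primes.
   A set of points is a predicate on subsets of S. *)
Definition is_point (P : subS) : Prop :=
  [/\ is_homogeneous_ideal P, is_prime_ideal P & relevant P].

Definition ptset := subS -> Prop.

Definition pt_incl (X Y : ptset) : Prop := forall P, is_point P -> X P -> Y P.
Definition pt_eq (X Y : ptset) : Prop :=
  forall P, is_point P -> (X P <-> Y P).
Definition pt_cap (X Y : ptset) : ptset := fun P => X P /\ Y P.

Definition variety (A : subS) : ptset :=
  fun P => is_point P /\ sub_incl A P.

Definition union_var (J : nat -> subS) (i : nat) : ptset :=
  fun P => exists2 k, (k < i)%N & variety (J k) P.

Definition span (X : ptset) : ptset :=
  fun P => is_point P /\
    forall Q, is_lin_subspace Q -> pt_incl X (variety (gen_ideal Q)) ->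
      variety (gen_ideal Q) P.

Definition linearly_joined (J : nat -> subS) (l : nat) : Prop :=
  forall i, (0 < i < l)%N ->
    pt_eq (pt_cap (variety (J i)) (union_var J i))
          (pt_cap (span (variety (J i))) (span (union_var J i))).

End Defs.

From Pilot Require Import Defs.
From HB Require Import structures.
From mathcomp Require Import all_boot all_order all_algebra.
From mathcomp Require Import mpoly.
From Stdlib Require Import Classical.

Set Implicit Arguments.
Unset Strict Implicit.
Unset Printing Implicit Defensive.

Import GRing.Theory.
Local Open Scope ring_scope.

(* (2) => (1): J_i contains Q_i, and a point containing (Q_i) and (Q_j) for
   some j <> i contains J_i = (M_i, Q_i) because M_i lies in (Q_j); so the
   linear joinedness of the (Q_i) transfers to the J_i, spans being monotone.

   (1) => (2): take Q_i the linear forms of J_i and M_i the elements of J_i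
   lying in every (Q_j), j <> i.  The span of a set of points is cut out by
   the linear forms vanishing on it, so the meet of the spans of V(J_m) and of
   V(J_0) u ... u V(J_(m-1)) is cut out by U_m = Q_m + (J_0 n ... n J_(m-1) n V).
   The ideal (U_m) is a homogeneous prime (a linear change of coordinates); if
   it is relevant it is a point of that meet, so linear joinedness gives
   J_m, J_k <= (U_m) for some k < m, and otherwise (U_m) contains every proper
   homogeneous ideal.  Splitting elements of (U_m) into a part in (Q_m) and
   a part in every (Q_k), k < m, an induction on m writes every f in J_i as
   a + b with a in (Q_i) and b in J_i n (Q_j) for all j <> i. *)

Section Ideals.
Variables (K : fieldType) (n : nat).
Local Notation S := {mpoly K[n]}.
Implicit Types (A B G I : subS K n) (p q : S).

Section IdealClosure.
Variables (I : subS K n) (idI : is_ideal I).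

Lemma ideal0 : I 0.
Proof. by case: idI. Qed.

Lemma idealD p q : I p -> I q -> I (p + q).
Proof. by case: idI => _ + _; apply. Qed.

Lemma idealMl a p : I p -> I (a * p).
Proof. by case: idI => _ _; apply. Qed.

Lemma idealMr a p : I p -> I (p * a).
Proof. by rewrite mulrC; apply: idealMl. Qed.

Lemma idealN p : I p -> I (- p).
Proof. by rewrite -mulN1r; apply: idealMl. Qed.

Lemma idealB p q : I p -> I q -> I (p - q).
Proof. by move=> Ip Iq; apply: idealD => //; apply: idealN. Qed.

Lemma idealZ (c : K) p : I p -> I (c *: p).
Proof. by rewrite -mul_mpolyC; apply: idealMl. Qed.

Lemma ideal_sum (T : Type) (r : seq T) (P : pred T) (F : T -> S) :
  (forall i, P i -> I (F i)) -> I (\sum_(i <- r | P i) F i).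
Proof. by move=> IF; apply: (big_ind I) => //; [exact: ideal0 | exact: idealD]. Qed.

Lemma ideal_congrM a b c d : I (a - b) -> I (c - d) -> I (a * c - b * d).
Proof.
move=> Iab Icd; rewrite -[a * c](subrK (a * d)) -mulrBr -addrA -mulrBl.
by apply: idealD; [apply: idealMl | apply: idealMr].
Qed.

Lemma ideal_congrX a b k : I (a - b) -> I (a ^+ k - b ^+ k).
Proof.
move=> Iab; elim: k => [|k IHk]; first by rewrite !expr0 subrr; apply: ideal0.
by rewrite !exprS; apply: ideal_congrM.
Qed.

End IdealClosure.

Lemma gen_ideal_is_ideal A : is_ideal (gen_ideal A).
Proof.
split=> [I [] // | p q Ap Aq I idI AI | a p Ap I idI AI].
  by apply: idealD => //; [apply: Ap | apply: Aq].
by apply: idealMl => //; apply: Ap.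
Qed.

Lemma sub_gen_ideal A : sub_incl A (gen_ideal A).
Proof. by move=> p Ap I _; apply. Qed.

Lemma gen_ideal_min A I : is_ideal I -> sub_incl A I -> sub_incl (gen_ideal A) I.
Proof. by move=> idI AI p; apply. Qed.

Lemma gen_ideal_mono A B : sub_incl A B -> sub_incl (gen_ideal A) (gen_ideal B).
Proof.
move=> AB; apply: gen_ideal_min; first exact: gen_ideal_is_ideal.
by move=> p /AB; apply: sub_gen_ideal.
Qed.

Definition sub_add A B : subS K n := fun p => exists a b, [/\ A a, B b & p = a + b].

Lemma sub_addl A B : B 0 -> sub_incl A (sub_add A B).
Proof. by move=> B0 a Aa; exists a, 0; rewrite addr0. Qed.

Lemma sub_addr A B : A 0 -> sub_incl B (sub_add A B).
Proof. by move=> A0 b Bb; exists 0, b; rewrite add0r. Qed.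

Lemma sub_add_ideal I G : is_ideal I -> is_ideal G -> is_ideal (sub_add I G).
Proof.
move=> idI idG; split.
- by apply: sub_addl; apply: ideal0.
- move=> _ _ [a [b [Ia Gb ->]]] [a' [b' [Ia' Gb' ->]]].
  by exists (a + a'), (b + b'); rewrite addrACA; split=> //; apply: idealD.
- move=> c _ [a [b [Ia Gb ->]]].
  by exists (c * a), (c * b); rewrite mulrDr; split=> //; apply: idealMl.
Qed.

Lemma gen_ideal_sub_add A B :
  sub_incl (gen_ideal (sub_add A B)) (sub_add (gen_ideal A) (gen_ideal B)).
Proof.
apply: gen_ideal_min; first by apply: sub_add_ideal; apply: gen_ideal_is_ideal.
by move=> _ [a [b [Aa Bb ->]]]; exists a, b; split=> //; apply: sub_gen_ideal.
Qed.

Definition ideal_cap (J : nat -> subS K n) (m : nat) : subS K n :=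
  fun p => forall k, (k < m)%N -> J k p.

Lemma ideal_cap_ideal (J : nat -> subS K n) m :
  (forall k, (k < m)%N -> is_ideal (J k)) -> is_ideal (ideal_cap J m).
Proof.
move=> idJ; split=> [k km | p q Jp Jq k km | a p Jp k km]; have idJk := idJ k km.
- exact: ideal0.
- by apply: idealD => //; [apply: Jp | apply: Jq].
- by apply: idealMl => //; apply: Jp.
Qed.

Definition linform (c : 'rV[K]_n) : S := \sum_i c 0 i *: 'X_i.

Fact linform_is_linear : linear linform.
Proof.
move=> a c d; rewrite /linform scaler_sumr -big_split /=.
by apply: eq_bigr => i _; rewrite !mxE scalerDl scalerA.
Qed.

HB.instance Definition _ :=
  GRing.isLinear.Build K 'rV[K]_n S _ linform linform_is_linear.

Lemma linear_formP p : linear_form p <-> exists c, p = linform c.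
Proof.
split=> [[f ->] | [c ->]]; last by exists (c 0).
by exists (\row_i f i); apply: eq_bigr => i _; rewrite mxE.
Qed.

Lemma linform_delta s : linform (delta_mx 0 s) = 'X_s.
Proof.
rewrite /linform (bigD1 s) //= big1 => [|i /negPf ne_is].
  by rewrite mxE !eqxx scale1r addr0.
by rewrite mxE ne_is andbF scale0r.
Qed.

Lemma linform_homog c : linform c \is 1.-homog.
Proof.
apply: rpred_sum => i _; apply: rpredZ.
by rewrite dhomogX /= mdeg1.
Qed.

Lemma linear_form0 : linear_form (0 : S).
Proof. by apply/linear_formP; exists 0; rewrite raddf0. Qed.

Lemma linear_formD p q : linear_form p -> linear_form q -> linear_form (p + q).
Proof.
move=> /linear_formP [c ->] /linear_formP [d ->].
by apply/linear_formP; exists (c + d); rewrite raddfD.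
Qed.

Lemma linear_formZ (a : K) p : linear_form p -> linear_form (a *: p).
Proof.
by move=> /linear_formP [c ->]; apply/linear_formP; exists (a *: c); rewrite linearZ.
Qed.

Definition linear_part I : subS K n := fun p => linear_form p /\ I p.

Lemma linear_part_lin_subspace I : is_ideal I -> is_lin_subspace (linear_part I).
Proof.
move=> idI; split=> [p [] // | | p q [lp Ip] [lq Iq] | c p [lp Ip]].
- by split; [apply: linear_form0 | apply: ideal0].
- by split; [apply: linear_formD | apply: idealD].
- by split; [apply: linear_formZ | apply: idealZ].
Qed.

Lemma gen_linear_part_min I G :
  is_ideal G -> sub_incl I G -> sub_incl (gen_ideal (linear_part I)) G.
Proof. by move=> idG IG; apply: gen_ideal_min => // p [_ /IG]. Qed.

Lemma sub_add_lin_subspace A B :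
  is_lin_subspace A -> is_lin_subspace B -> is_lin_subspace (sub_add A B).
Proof.
move=> [linA A0 AD AZ] [linB B0 BD BZ]; split.
- by move=> _ [a [b [Aa Bb ->]]]; apply: linear_formD; [apply: linA | apply: linB].
- exact: sub_addl.
- move=> _ _ [a [b [Aa Bb ->]]] [a' [b' [Aa' Bb' ->]]].
  by exists (a + a'), (b + b'); rewrite addrACA; split; [apply: AD | apply: BD |].
- move=> c _ [a [b [Aa Bb ->]]].
  by exists (c *: a), (c *: b); rewrite scalerDr; split; [apply: AZ | apply: BZ |].
Qed.

End Ideals.

Section LinearSubspaceIdeals.
Variables (K : fieldType) (n : nat).
Local Notation S := {mpoly K[n]}.
Implicit Types (G I Q : subS K n) (p q : S).

Lemma lin_subspace_rowspace Q :
  is_lin_subspace Q -> exists A : 'M[K]_n, forall c, Q (linform c) <-> (c <= A)%MS.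
Proof.
(* Q is not decidable: grow a matrix inside Q until it spans Q, which must
   happen before its rank exceeds n. *)
case=> _ Q0 QD QZ.
pose inQ (A : 'M[K]_n) := forall c, (c <= A)%MS -> Q (linform c).
pose spans (A : 'M[K]_n) := forall c, Q (linform c) <-> (c <= A)%MS.
have grow A : inQ A -> (exists B, spans B) \/ exists2 B, inQ B & (\rank A < \rank B)%N.
  move=> QA; case: (classic (forall c, Q (linform c) -> (c <= A)%MS)) => [AQ|].
    by left; exists A => c; split; [apply: AQ | apply: QA].
  move=> /not_all_ex_not [c /(imply_to_and (Q _)) [Qc cA]]; right; exists (A + c)%MS.
    move=> _ /sub_addsmxP [[u v] /= ->]; rewrite raddfD /=.
    apply: QD; first exact/QA/submxMl.
    by rewrite [v]mx11_scalar mul_scalar_mx linearZ; apply: QZ.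
  rewrite rank_ltmx // ltmxE addsmxSl /=; apply/negP => AcA; apply: cA.
  exact: submx_trans (addsmxSr A c) AcA.
have large k : (exists B, spans B) \/ exists2 A, inQ A & (k <= \rank A)%N.
  elim: k => [|k [|[A QA kA]]]; [right | by left |].
  - by exists 0 => // c; rewrite submx0 => /eqP ->; rewrite raddf0.
  have [|[B QB AB]] := grow A QA; [by left | right].
  by exists B => //; apply: leq_ltn_trans AB.
by have [//|[A _]] := large n.+1; rewrite ltnNge rank_leq_col.
Qed.

Definition linsubst (B : 'M[K]_n) : n.-tuple S := [tuple linform (row s B) | s < n].

Lemma comp_linform B c : linform c \mPo linsubst B = linform (c *m B).
Proof.
rewrite mulmx_sum_row !raddf_sum; apply: eq_bigr => i _ /=.
by rewrite comp_mpolyZ comp_mpolyXU -tnth_nth tnth_mktuple linearZ.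
Qed.

Lemma linsubst_homog B s : tnth (linsubst B) s \is 1.-homog.
Proof. by rewrite tnth_mktuple linform_homog. Qed.

Lemma ideal_sub_comp G (t : n.-tuple S) :
  is_ideal G -> (forall s, G ('X_s - tnth t s)) -> forall p, G (p - (p \mPo t)).
Proof.
move=> idG Gt; elim/mpolyind => [|c m p _ _ IHp] /=.
  by rewrite comp_mpoly0 subr0; apply: ideal0.
rewrite comp_mpolyD comp_mpolyZ opprD addrACA -scalerBr.
apply: idealD => //; apply: idealZ => //.
rewrite comp_mpolyX {1}mpolyXE_id.
apply: (big_rec2 (fun a b => G (a - b))); first by rewrite subrr; apply: ideal0.
by move=> i a b _ Gab; apply: ideal_congrM => //; apply: ideal_congrX.
Qed.

Section HomogeneousSubstitution.
Variables (t : n.-tuple S) (t_homog : forall s, tnth t s \is 1.-homog).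

Lemma comp_mpolyX_homog m : 'X_[m] \mPo t \is (mdeg m).-homog.
Proof.
rewrite comp_mpolyX mdegE.
apply: (big_rec2 (fun d (p : S) => p \is d.-homog)) => [|i d p _ hp].
  exact: dhomog1.
apply: dhomogM => //.
by have := dhomogMn (m i) (t_homog i); rewrite mul1n.
Qed.

Lemma pihomog_comp_mpoly d p :
  pihomog mdeg d (p \mPo t) = pihomog mdeg d p \mPo t.
Proof.
elim/mpolyind: p => [|c m p _ _ IHp]; first by rewrite !linear0.
rewrite !linearP /= {}IHp; congr (c *: _ + _).
have [<-|ne_md] := eqVneq (mdeg m) d.
  rewrite [pihomog _ _ 'X_[m]]pihomog_dE ?dhomogX //.
  exact/pihomog_dE/comp_mpolyX_homog.
rewrite (pihomog_ne0 ne_md (comp_mpolyX_homog m)).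
by rewrite (pihomog_ne0 ne_md) ?linear0 ?dhomogX.
Qed.

Lemma comp_kernel_homogeneous_prime I :
  (forall p, I p <-> p \mPo t = 0) -> is_homogeneous_ideal I /\ is_prime_ideal I.
Proof.
move=> kerI.
have idI : is_ideal I.
  split=> [|p q|a p]; rewrite ?kerI ?comp_mpoly0 //.
    by rewrite comp_mpolyD => -> ->; rewrite addr0.
  by rewrite rmorphM /= => ->; rewrite mulr0.
split; [split=> // p d | split=> // [|p q]].
- by rewrite !kerI /hcomp => pt0; rewrite -pihomog_comp_mpoly pt0 linear0.
- by rewrite kerI comp_mpoly1; apply/eqP; apply: oner_neq0.
- rewrite !kerI rmorphM /= => /eqP; rewrite mulf_eq0.
  by case/orP => /eqP; [left | right].
Qed.

End HomogeneousSubstitution.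

Lemma gen_ideal_lin_subspace_point Q :
  is_lin_subspace Q -> relevant (gen_ideal Q) -> is_point (gen_ideal Q).
Proof.
move=> linQ relQ; have [A QA] := lin_subspace_rowspace linQ.
(* (Q) is the kernel of the substitution x |-> x B, where B projects onto a
   complement of the row space of Q along it. *)
pose B := proj_mx (A^C)%MS A.
have capAA : ((A^C)%MS :&: A)%MS = 0 by rewrite capmxC capmx_compl.
have [[idK _] _] := comp_kernel_homogeneous_prime (linsubst_homog B)
  (I := fun p => p \mPo linsubst B = 0) (fun p => conj id id).
have QK : sub_incl Q (fun p => p \mPo linsubst B = 0).
  have [Qlin _ _ _] := linQ.
  move=> _ /[dup] /Qlin /linear_formP [c ->] /QA cA.
  by rewrite comp_linform proj_mx_0 // raddf0.
have kerQ p : gen_ideal Q p <-> p \mPo linsubst B = 0.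
  split=> [|pt0]; first exact: gen_ideal_min idK QK p.
  suff : gen_ideal Q (p - (p \mPo linsubst B)) by rewrite pt0 subr0.
  apply: ideal_sub_comp; first exact: gen_ideal_is_ideal.
  move=> s; apply: sub_gen_ideal; rewrite tnth_mktuple rowE -linform_delta -raddfB.
  apply/QA/proj_mx_compl_sub/submx_full.
  by rewrite addsmxC addsmx_compl_full.
have [homQ primeQ] := comp_kernel_homogeneous_prime (linsubst_homog B) kerQ.
by split.
Qed.

Lemma homogeneous_ideal_sub_irrelevant I G :
  is_homogeneous_ideal I -> ~ I 1 -> is_ideal G -> (forall i, G 'X_i) ->
  sub_incl I G.
Proof.
move=> [idI homI] I1 idG GX p Ip.
have p0 : p@_0%MM = 0.
  apply: NNPP => /eqP nz0; apply: I1.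
  have hcomp0 : hcomp 0 p = p@_0%MM *: 1.
    rewrite /hcomp (eq_bigl (pred1 0%MM)) => [|m]; last by rewrite /= mdeg_eq0.
    rewrite -big_filter filter_pred1_uniq ?msupp_uniq ?mcoeff_msupp //.
    by rewrite big_seq1 mpolyX0.
  have := idealZ idI (p@_0%MM)^-1 (homI p 0%N Ip).
  by rewrite hcomp0 scalerA mulVf ?scale1r.
rewrite [p]mpolyE; apply: ideal_sum => // m _.
have [->|nz] := eqVneq m 0%MM; first by rewrite p0 scale0r; apply: ideal0.
apply: idealZ => //.
have [i mi] : exists i, m i != 0%N.
  apply: NNPP => none; move/eqP: nz; apply; apply/mnmP => i.
  by rewrite mnm0E; apply: NNPP => /eqP mi; apply: none; exists i.
rewrite -(submK (m := U_(i)%MM) (m' := m)); last by rewrite lep1mP.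
by rewrite mpolyXD; apply: idealMl.
Qed.

End LinearSubspaceIdeals.

Section Spans.
Variables (K : fieldType) (n : nat).
Implicit Types (X Y : ptset K n) (I P : subS K n).

Lemma point_ideal P : is_point P -> is_ideal P.
Proof. by case=> [[]]. Qed.

Definition vanishing_forms X : subS K n :=
  fun q => linear_form q /\ forall P, is_point P -> X P -> P q.

Lemma vanishing_forms_lin_subspace X : is_lin_subspace (vanishing_forms X).
Proof.
split=> [q [] // | | p q [lp Xp] [lq Xq] | c p [lp Xp]].
- by split=> [|P /point_ideal idP _]; [apply: linear_form0 | apply: ideal0].
- split=> [|P ptP XP]; first exact: linear_formD.
  by apply: idealD; [apply: point_ideal | apply: Xp | apply: Xq].
- split=> [|P ptP XP]; first exact: linear_formZ.
  by apply: idealZ; [apply: point_ideal | apply: Xp].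
Qed.

Lemma spanP X P : Defs.span X P <-> is_point P /\ sub_incl (vanishing_forms X) P.
Proof.
split=> [[ptP spanXP] | [ptP vanP]].
  have XV : pt_incl X (variety (gen_ideal (vanishing_forms X))).
    move=> P' ptP' XP'; split=> //.
    by apply: gen_ideal_min (point_ideal ptP') _ => q [_ /(_ P' ptP' XP')].
  have [_ VP] := spanXP _ (vanishing_forms_lin_subspace X) XV.
  by split=> // q /sub_gen_ideal /VP.
split=> // Q [Qlin _ _ _] XQ; split=> //.
apply: gen_ideal_min (point_ideal ptP) _ => q Qq; apply: vanP; split; first exact: Qlin.
by move=> P' ptP' /(XQ P' ptP') [_]; apply; apply: sub_gen_ideal.
Qed.

Lemma span_sup X P : is_point P -> X P -> Defs.span X P.
Proof. by move=> ptP XP; split=> // Q _; apply. Qed.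

Lemma span_mono X Y P : pt_incl X Y -> Defs.span X P -> Defs.span Y P.
Proof.
move=> XY [ptP spanXP]; split=> // Q linQ YQ.
by apply: spanXP => // P' ptP' /(XY P' ptP'); apply: YQ.
Qed.

Lemma vanishing_forms_variety I : is_point I ->
  sub_incl (vanishing_forms (variety I)) (linear_part I).
Proof. by move=> ptI q [lq /(_ I ptI (conj ptI (fun _ => id)))]. Qed.

Lemma linear_part_vanishing_variety I :
  sub_incl (linear_part I) (vanishing_forms (variety I)).
Proof. by move=> q [lq Iq]; split=> // P _ [_]; apply. Qed.

Lemma vanishing_forms_union_var (J : nat -> subS K n) m :
  (forall k, (k < m)%N -> is_point (J k)) ->
  sub_incl (vanishing_forms (union_var J m)) (linear_part (ideal_cap J m)).
Proof.
move=> ptJ q [lq Vq]; split=> // k km.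
by apply: Vq (ptJ k km) _; exists k => //; split=> //; apply: ptJ.
Qed.

Lemma linear_part_vanishing_union_var (J : nat -> subS K n) m :
  sub_incl (linear_part (ideal_cap J m)) (vanishing_forms (union_var J m)).
Proof. by move=> q [lq Jq]; split=> // P _ [k km [_]]; apply; apply: Jq. Qed.

End Spans.

Lemma linearly_joined_of_split (K : fieldType) n l (J Q M : nat -> subS K n) :
  (forall i, (i < l)%N -> sub_eq (J i) (gen_ideal2 (M i) (Q i))) ->
  linearly_joined (fun i => gen_ideal (Q i)) l ->
  (forall i j, (i < l)%N -> (j < l)%N -> i <> j -> sub_incl (M i) (gen_ideal (Q j))) ->
  linearly_joined J l.
Proof.
move=> JMQ QJ MQ i Hi P ptP.
have /andP [_ il] := Hi.
have VJQ k : (k < l)%N -> pt_incl (variety (J k)) (variety (gen_ideal (Q k))).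
  move=> kl P' _ [ptP' JP']; split=> //.
  apply: gen_ideal_min (point_ideal ptP') _ => q Qq; apply: JP'.
  by apply/(JMQ k kl q); apply: sub_gen_ideal; right.
have JP a b : (a < l)%N -> (b < l)%N -> a <> b ->
    sub_incl (gen_ideal (Q a)) P -> sub_incl (gen_ideal (Q b)) P -> sub_incl (J a) P.
  move=> al bl ne_ab QaP QbP p /(JMQ a al); apply; first exact: point_ideal.
  by move=> q [/(MQ a b al bl ne_ab) /QbP | /sub_gen_ideal /QaP].
split=> [[VP UP] | [spanI spanU]]; first by split; apply: span_sup.
have UJQ : pt_incl (union_var J i) (union_var (fun k => gen_ideal (Q k)) i).
  by move=> P' ptP' [k ki VP']; exists k => //; apply: VJQ ptP' VP'; apply: ltn_trans il.
have [[_ QiP] [k ki [_ QkP]]] :=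
  (QJ i Hi P ptP).2 (conj (span_mono (VJQ i il) spanI) (span_mono UJQ spanU)).
have kl : (k < l)%N by apply: ltn_trans il.
have ne_ik : i <> k by move=> eik; rewrite eik ltnn in ki.
split; first by split=> //; apply: (JP i k).
by exists k => //; split=> //; apply: (JP k i) => //; apply: nesym.
Qed.

Section JoinedSplit.
Variables (K : fieldType) (n l : nat) (J : nat -> subS K n).

Definition meet_forms m : subS K n :=
  sub_add (linear_part (J m)) (linear_part (ideal_cap J m)).

Definition cross_part m i : subS K n :=
  fun p => J i p /\ forall j, (j < m)%N -> j <> i -> gen_ideal (linear_part (J j)) p.

Hypothesis J_point : forall i, (i < l)%N -> is_point (J i).
Hypothesis J_joined : linearly_joined J l.

Let J_ideal k : (k < l)%N -> is_ideal (J k).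
Proof. by move/J_point/point_ideal. Qed.

Let gen_linear_part_sub k :
  (k < l)%N -> sub_incl (gen_ideal (linear_part (J k))) (J k).
Proof. by move=> kl; apply: gen_linear_part_min (J_ideal kl) _. Qed.

Let gen_cap_sub m j : (j < m)%N ->
  sub_incl (gen_ideal (linear_part (ideal_cap J m))) (gen_ideal (linear_part (J j))).
Proof. by move=> jm; apply: gen_ideal_mono => q [lq Jq]; split=> //; apply: Jq. Qed.

Lemma cross_part_ideal i : (i < l)%N -> is_ideal (cross_part l i).
Proof.
move=> il; have idJi := J_ideal il.
split=> [|p q [Jp Cp] [Jq Cq] | a p [Jp Cp]]; (split; [|move=> j jl ne_ji]).
- exact: ideal0.
- exact: (ideal0 (gen_ideal_is_ideal _)).
- exact: idealD.
- by apply: (idealD (gen_ideal_is_ideal _)); [apply: Cp | apply: Cq].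
- exact: idealMl.
- by apply: (idealMl (gen_ideal_is_ideal _)); apply: Cp.
Qed.

Lemma gen_meet_forms_cover m : (0 < m < l)%N ->
  sub_incl (J m) (gen_ideal (meet_forms m)) /\
  exists2 k, (k < m)%N & sub_incl (J k) (gen_ideal (meet_forms m)).
Proof.
move=> Hm; have /andP [m_gt0 ml] := Hm.
have ptJm k : (k < m)%N -> is_point (J k) by move=> km; apply/J_point/(ltn_trans km).
have idcap : is_ideal (ideal_cap J m) by apply: ideal_cap_ideal => k /ptJm /point_ideal.
have [_ Lm0 _ _] := linear_part_lin_subspace (J_ideal ml).
have [_ Wm0 _ _] := linear_part_lin_subspace idcap.
have linU : is_lin_subspace (meet_forms m).
  by apply: sub_add_lin_subspace; apply: linear_part_lin_subspace => //; apply: J_ideal.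
case: (classic (relevant (gen_ideal (meet_forms m)))) => [relU | irrU].
  have ptU := gen_ideal_lin_subspace_point linU relU.
  have spanJm : Defs.span (variety (J m)) (gen_ideal (meet_forms m)).
    apply/spanP; split=> // q /(vanishing_forms_variety (J_point ml)) Lq.
    by apply: sub_gen_ideal; apply: sub_addl.
  have spanUm : Defs.span (union_var J m) (gen_ideal (meet_forms m)).
    apply/spanP; split=> // q /(vanishing_forms_union_var ptJm) Wq.
    by apply: sub_gen_ideal; apply: sub_addr.
  have [[_ JmU] [k km [_ JkU]]] := (J_joined Hm ptU).2 (conj spanJm spanUm).
  by split=> //; exists k.
have allX : forall i, gen_ideal (meet_forms m) 'X_i := NNPP _ irrU.
have JU k : (k < l)%N -> sub_incl (J k) (gen_ideal (meet_forms m)).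
  move=> kl; have [homJ [_ J1 _] _] := J_point kl.
  exact: homogeneous_ideal_sub_irrelevant homJ J1 (gen_ideal_is_ideal _) allX.
by split; [apply: JU | exists 0%N => //; apply: JU; apply: ltn_trans ml].
Qed.

Lemma linearly_joined_decomposition m i : (m <= l)%N -> (i < m)%N ->
  sub_incl (J i) (sub_add (gen_ideal (linear_part (J i))) (cross_part m i)).
Proof.
elim: m i => [//|m IHm] i Sml.
rewrite ltnS leq_eqVlt => /orP [/eqP eq_im | lt_im] f Jif.
  move: Sml; rewrite -{}eq_im => il.
  have [i0 | i_gt0] := posnP i.
    exists 0, f; rewrite add0r; split=> //; first exact: (ideal0 (gen_ideal_is_ideal _)).
    by split=> // j; rewrite i0 ltnS leqn0 => /eqP.
  have /gen_meet_forms_cover [Ji _] : (0 < i < l)%N by rewrite i_gt0.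
  have [a [w [La Ww Efaw]]] := gen_ideal_sub_add (Ji f Jif).
  exists a, w; split=> //; split=> [|j ji ne_ji].
    have -> : w = f - a by rewrite Efaw addrC addKr.
    by apply: idealB; [apply: J_ideal | | apply: gen_linear_part_sub].
  by apply: (gen_cap_sub (m := i)) Ww; rewrite ltn_neqAle -ltnS ji andbT; apply/eqP.
have ml : (m < l)%N := Sml.
have il : (i < l)%N := ltn_trans lt_im ml.
have [a [b [La [Jib Cb] ->]]] := IHm i (ltnW Sml) lt_im f Jif.
have /gen_meet_forms_cover [_ [k km JkU]] : (0 < m < l)%N.
  by rewrite ml andbT (leq_ltn_trans _ lt_im).
have kl : (k < l)%N := ltn_trans km ml.
have Ub : gen_ideal (meet_forms m) b.
  apply: JkU; have [->//|ne_ki] := eqVneq k i.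
  by apply: (gen_linear_part_sub kl); apply: Cb => //; apply/eqP.
have [c [w [Lc Ww Eb]]] := gen_ideal_sub_add Ub.
have Ec : c = b - w by rewrite Eb addrK.
have Lwi : gen_ideal (linear_part (J i)) w by apply: (gen_cap_sub lt_im).
exists (a + w), c; split.
- exact: (idealD (gen_ideal_is_ideal _) La Lwi).
- split=> [|j jm ne_ji].
    by rewrite Ec; apply: idealB; [apply: J_ideal | | apply: gen_linear_part_sub].
  have [->//|ne_jm] := eqVneq j m.
  have jm' : (j < m)%N by rewrite ltn_neqAle ne_jm -ltnS.
  by rewrite Ec; apply: (idealB (gen_ideal_is_ideal _)); [apply: Cb | apply: gen_cap_sub Ww].
- by rewrite Eb [c + w]addrC addrA.
Qed.

Lemma linearly_joined_split :
  exists (Q M : nat -> subS K n),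
     [/\ (forall i, (i < l)%N -> is_lin_subspace (Q i) /\ is_ideal (M i)),
         (forall i, (i < l)%N -> sub_eq (J i) (gen_ideal2 (M i) (Q i))),
         linearly_joined (fun i => gen_ideal (Q i)) l &
         (forall i j, (i < l)%N -> (j < l)%N -> i <> j ->
            sub_incl (M i) (gen_ideal (Q j)))].
Proof.
exists (fun i => linear_part (J i)), (cross_part l); split.
- move=> i il; split; [exact/linear_part_lin_subspace/J_ideal | exact: cross_part_ideal].
- move=> i il p; split; last first.
    by move: p; apply: gen_ideal_min (J_ideal il) _ => q [[Jq _] | [_ Jq]].
  move/(linearly_joined_decomposition (leqnn l) il) => [a [b [La Cb ->]]].
  apply: (idealD (gen_ideal_is_ideal _)).
    by apply: gen_ideal_mono La => q Lq; right.
  by apply: sub_gen_ideal; left.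
- move=> i Hi P ptP; split=> [[VP UP] | [/spanP [_ vanI] /spanP [_ vanU]]].
    by split; apply: span_sup.
  have UP : sub_incl (gen_ideal (meet_forms i)) P.
    apply: gen_ideal_min (point_ideal ptP) _ => _ [a [b [[la Ja] [lb Jb] ->]]].
    apply: (idealD (point_ideal ptP)); [apply: vanI | apply: vanU].
      by apply: linear_part_vanishing_variety; split; last exact: sub_gen_ideal.
    apply: linear_part_vanishing_union_var; split=> // k ki.
    by apply: sub_gen_ideal; split; last exact: Jb.
  have [Ji [k ki Jk]] := gen_meet_forms_cover Hi.
  have VP k' : sub_incl (J k') (gen_ideal (meet_forms i)) ->
      variety (gen_ideal (linear_part (J k'))) P.
    move=> JkU; split=> //; apply: gen_linear_part_min (point_ideal ptP) _.
    by move=> q /JkU /UP.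
  by split; [apply: VP | exists k => //; apply: VP].
- by move=> i j il jl ne_ij p [_ Cp]; apply: Cp => //; apply: nesym.
Qed.

End JoinedSplit.

Theorem mainTheorem2 (K : fieldType) (r l : nat)
    (J : nat -> {mpoly K[r.+1]} -> Prop) :
  (forall i, (i < l)%N ->
     is_homogeneous_ideal (J i) /\ is_prime_ideal (J i) /\ relevant (J i)) ->
  (linearly_joined J l <->
   exists (Q M : nat -> {mpoly K[r.+1]} -> Prop),
     [/\ (forall i, (i < l)%N -> is_lin_subspace (Q i) /\ is_ideal (M i)),
         (forall i, (i < l)%N -> sub_eq (J i) (gen_ideal2 (M i) (Q i))),
         linearly_joined (fun i => gen_ideal (Q i)) l &
         (forall i j, (i < l)%N -> (j < l)%N -> i <> j ->
            sub_incl (M i) (gen_ideal (Q j)))]).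
Proof.
move=> hJ; have ptJ i : (i < l)%N -> is_point (J i).
  by move=> il; have [? [? ?]] := hJ i il; split.
split=> [LJ | [Q [M [_ JMQ QJ MQ]]]]; first exact: linearly_joined_split ptJ LJ.
exact: linearly_joined_of_split JMQ QJ MQ.
Qed.
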